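(* Let $\Phi$ be the set of formulas of $NOM$, let $\mathcal Q$ be an orthomodular lattice, and let $[\![\cdot]\!]:\Phi\to\mathcal Q$ be a surjective interpretation. If every rule of inference of $NOM$ is sound in this interpretation, then for all formulas $\phi,\psi$: $[\![\phi\wedge\psi]\!]=[\![\phi]\!]\wedge[\![\psi]\!]$, $[\![\phi\rightarrow\psi]\!]=[\![\phi]\!]\rightarrow[\![\psi]\!]$ (Sasaki arrow), and $[\![\neg\phi]\!]=\neg[\![\phi]\!]$.
   Context: The propositional deductive system $NOM$: formulas are built from propositional letters using $\wedge$, $\rightarrow$, $\neg$. Sequents are $\phi_1,\ldots,\phi_n\vdash\psi$ ($n\ge0$) with antecedent a finite ordered sequence. With $\Gamma$ a finite possibly empty sequence of formulas and $\phi,\psi,\chi$ formulas, the rules of $NOM$ are: (assumption) $\Gamma,\phi\vdash\phi$; (cut) $\Gamma\vdash\phi$, $\Gamma,\phi\vdash\psi$ $\Rightarrow$ $\Gamma\vdash\psi$; (paste) $\Gamma\vdash\phi$, $\Gamma\vdash\psi$ $\Rightarrow$ $\Gamma,\phi\vdash\psi$; (compatible exchange) $\Gamma,\phi,\psi\vdash\phi$, $\Gamma,\phi,\psi\vdash\chi$, $\Gamma,\psi,\phi\vdash\psi$ $\Rightarrow$ $\Gamma,\psi,\phi\vdash\chi$; ($\wedge$-intro) $\Gamma\vdash\phi$, $\Gamma\vdash\psi$ $\Rightarrow$ $\Gamma\vdash\phi\wedge\psi$; ($\wedge$-elim) $\Gamma\vdash\phi\wedge\psi$ $\Rightarrow$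 $\Gamma\vdash\phi$ and $\Rightarrow$ $\Gamma\vdash\psi$; ($\rightarrow$-intro) $\Gamma,\phi\vdash\psi$ $\Rightarrow$ $\Gamma\vdash\phi\rightarrow\psi$; ($\rightarrow$-elim) $\Gamma\vdash\phi\rightarrow\psi$ $\Rightarrow$ $\Gamma,\phi\vdash\psi$; (excluded middle) $\Gamma,\phi\vdash\psi$, $\Gamma,\neg\phi\vdash\psi$ $\Rightarrow$ $\Gamma\vdash\psi$; (explosion) $\Gamma\vdash\neg\phi$ $\Rightarrow$ $\Gamma,\phi\vdash\psi$. An orthomodular lattice is a bounded lattice with an order-reversing involution $\neg$ satisfying $a\wedge\neg a=\bot$, $a\vee\neg a=\top$, and $a\le b\Rightarrow a\vee(\neg a\wedge b)=b$. In it, $a\mathbin{\&}b=(a\vee\neg b)\wedge b$ and $a\rightarrow b=\neg a\vee(a\wedge b)$; $\&$ associates to the left and $a_1\mathbin{\&}\cdots\mathbin{\&}a_n=\top$ when $n=0$. An interpretation is any function $[\![\cdot]\!]:\Phi\to\mathcal Q$ into an orthomodular lattice. A sequent $\phi_1,\ldots,\phi_n\vdash\psi$ is true in it if $[\![\phi_1]\!]\mathbin{\&}\cdots\mathbin{\&}[\![\phi_n]\!]\le[\![\psi]\!]$; a rule of inference is sound if, in every instance, its conclusion is true whenever all its premises are true. *)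

From HB Require Import structures.
From mathcomp Require Import all_boot all_order.
Set Implicit Arguments. Unset Strict Implicit. Unset Printing Implicit Defensive.
Import Order.TTheory.
Local Open Scope order_scope.

Inductive formula : Type :=
  | Var : nat -> formula
  | And : formula -> formula -> formula
  | Imp : formula -> formula -> formula
  | Neg : formula -> formula.

Section OML.
Context {disp : Order.disp_t} {L : tbLatticeType disp}.

Definition orthomodular (neg : L -> L) : Prop :=
  [/\ (forall a b : L, a <= b -> neg b <= neg a),
      (forall a : L, neg (neg a) = a),
      (forall a : L, a `&` neg a = \bot),
      (forall a : L, a `|` neg a = \top) &
      (forall a b : L, a <= b -> a `|` (neg a `&` b) = b)].

Definition sand (neg : L -> L) (a b : L) : L := (a `|` neg b) `&` b.
Definition simp (neg : L -> L) (a b : L) : L := neg a `|` (a `&` b).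

Definition sand_seq (neg : L -> L) (s : seq L) : L :=
  match s with
  | [::] => \top
  | a :: s' => foldl (sand neg) a s'
  end.

Definition seq_true (neg : L -> L) (I : formula -> L)
    (G : seq formula) (psi : formula) : Prop :=
  sand_seq neg (map I G) <= I psi.

(* Soundness of every rule of NOM (Gamma, phi is rcons Gamma phi). *)
Definition nom_sound (neg : L -> L) (I : formula -> L) : Prop :=
  let T := seq_true neg I in
  (forall G phi, T (rcons G phi) phi) /\
  (forall G phi psi, T G phi -> T (rcons G phi) psi -> T G psi) /\
  (* paste *)
  (forall G phi psi, T G phi -> T G psi -> T (rcons G phi) psi) /\
  (* compatible exchange *)
  (forall G phi psi chi,
      T (rcons (rcons G phi) psi) phi ->
      T (rcons (rcons G phi) psi) chi ->
      T (rcons (rcons G psi) phi) psi ->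
      T (rcons (rcons G psi) phi) chi) /\
  (forall G phi psi, T G phi -> T G psi -> T G (And phi psi)) /\
  (forall G phi psi, T G (And phi psi) -> T G phi) /\
  (forall G phi psi, T G (And phi psi) -> T G psi) /\
  (forall G phi psi, T (rcons G phi) psi -> T G (Imp phi psi)) /\
  (forall G phi psi, T G (Imp phi psi) -> T (rcons G phi) psi) /\
  (forall G phi psi, T (rcons G phi) psi -> T (rcons G (Neg phi)) psi ->
      T G psi) /\
  (forall G phi psi, T G (Neg phi) -> T (rcons G phi) psi).

End OML.

From mathcomp Require Import all_boot all_order.
Local Open Scope order_scope.
Import Order.TTheory.

(* In an orthomodular lattice the Sasaki product [x & a = (x \/ ~a) /\ a] and
   the Sasaki arrow [a -> b] are adjoint: [x & a <= b] iff [x <= a -> b].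
   Soundness of ->-elim on the assumption [phi -> psi |- phi -> psi], and of
   ->-intro on a formula denoting [I phi -> I psi] (surjectivity), then give
   the two inequalities for implication; conjunction is the same argument with
   /\-elim and /\-intro.  For negation, explosion into a formula denoting
   bottom gives [I (~phi) <= ~ I phi] (the adjunction with [b = bottom]),
   excluded middle gives [I phi \/ I (~phi) = top], and by orthomodularity the
   only element below [~ I phi] that joins [I phi] to top is [~ I phi]. *)

Section Orthomodular.
Context {disp : Order.disp_t} {L : tbLatticeType disp} {neg : L -> L}.
Hypothesis OM : orthomodular neg.

Lemma le_neg a b : a <= b -> neg b <= neg a.
Proof. by case: OM => + _ _ _ _; apply. Qed.

Lemma negK : involutive neg.
Proof. by case: OM. Qed.

Lemma meet_neg a : a `&` neg a = \bot.
Proof. by case: OM. Qed.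

Lemma orthomodularity {a b} : a <= b -> a `|` (neg a `&` b) = b.
Proof. by case: OM => _ _ _ _; apply. Qed.

Lemma negU a b : neg (a `|` b) = neg a `&` neg b.
Proof.
apply: le_anti; apply/andP; split.
  by rewrite lexI; apply/andP; split; apply: le_neg; [exact: leUl | exact: leUr].
rewrite -[X in X <= _]negK; apply: le_neg.
by rewrite leUx; apply/andP; split; rewrite -[X in X <= _]negK; apply: le_neg;
  [exact: leIl | exact: leIr].
Qed.

Lemma negI a b : neg (a `&` b) = neg a `|` neg b.
Proof. by rewrite -[a]negK -[b]negK -negU !negK. Qed.

Lemma neg1 : neg \top = \bot.
Proof. by rewrite -(meet_neg \top) meet1x. Qed.

Lemma orthomodularity_dual a b : a <= b -> (neg b `|` a) `&` b = a.
Proof.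
move=> le_ab; apply: (can_inj negK).
rewrite negI negU negK joinC -{2}[b]negK orthomodularity //.
exact: le_neg.
Qed.

Lemma orthocomplement_unique a n : n <= neg a -> a `|` n = \top -> n = neg a.
Proof.
move=> le_n_na a_n_top.
by rewrite -(orthomodularity le_n_na) -negU (joinC n a) a_n_top neg1 joinx0.
Qed.

Lemma le_sand {a x y} : x <= y -> sand neg x a <= sand neg y a.
Proof. by move=> le_xy; rewrite leI2 ?leU2. Qed.

Lemma le_simp {a x y} : x <= y -> simp neg a x <= simp neg a y.
Proof. by move=> le_xy; rewrite leU2 ?leI2. Qed.

(* Orthomodularity applied to [neg a <= x \/ neg a]. *)
Lemma le_simp_sand x a : x <= simp neg a (sand neg x a).
Proof.
rewrite /simp /sand meetCA meetxx meetC -{2}[a]negK orthomodularity.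
  exact: leUl.
exact: leUr.
Qed.

Lemma sand_simp a b : sand neg (simp neg a b) a = a `&` b.
Proof.
by rewrite /sand /simp joinAC joinxx orthomodularity_dual ?leIl.
Qed.

Lemma sasaki_adjunction x a b : (sand neg x a <= b) = (x <= simp neg a b).
Proof.
apply/idP/idP => [le_sand_b | le_x_simp].
- exact: le_trans (le_simp_sand x a) (le_simp le_sand_b).
- by rewrite (le_trans (le_sand le_x_simp)) // sand_simp leIr.
Qed.

End Orthomodular.

Section Soundness.
Context {disp : Order.disp_t} {L : tbLatticeType disp}.
Context {neg : L -> L} {I : formula -> L}.
Hypothesis I_surj : forall q : L, exists phi : formula, I phi = q.
Hypothesis sound : nom_sound neg I.

Lemma seq_true0 f : seq_true neg I [::] f = (\top <= I f).
Proof. by []. Qed.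

Lemma seq_true1 c f : seq_true neg I [:: c] f = (I c <= I f).
Proof. by []. Qed.

Lemma seq_true2 c d f :
  seq_true neg I [:: c; d] f = (sand neg (I c) (I d) <= I f).
Proof. by []. Qed.

Lemma sound_And phi psi : I (And phi psi) = I phi `&` I psi.
Proof.
case: sound => assume [_ [_ [_ [andI [andEl [andEr _]]]]]].
have hyp := assume [::] (And phi psi).
apply: le_anti; rewrite lexI (andEl _ _ _ hyp) (andEr _ _ _ hyp) /=.
have [c Ic] := I_surj (I phi `&` I psi).
by rewrite -Ic -seq_true1; apply: andI; rewrite seq_true1 Ic ?leIl ?leIr.
Qed.

Hypothesis OM : orthomodular neg.

Lemma sound_Imp phi psi : I (Imp phi psi) = simp neg (I phi) (I psi).
Proof.
case: sound => assume [_ [_ [_ [_ [_ [_ [impI [impE _]]]]]]]].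
apply: le_anti; apply/andP; split.
  have := impE _ _ _ (assume [::] (Imp phi psi)).
  by rewrite seq_true2 (sasaki_adjunction OM).
have [c Ic] := I_surj (simp neg (I phi) (I psi)).
rewrite -Ic -seq_true1; apply: impI.
by rewrite seq_true2 Ic (sasaki_adjunction OM).
Qed.

Lemma sound_Neg phi : I (Neg phi) = neg (I phi).
Proof.
case: sound => assume [_ [_ [_ [_ [_ [_ [_ [_ [exclude explode]]]]]]]]].
apply: (orthocomplement_unique OM).
  have [bot Ibot] := I_surj \bot.
  have := explode _ _ bot (assume [::] (Neg phi)).
  by rewrite seq_true2 Ibot (sasaki_adjunction OM) /simp meetx0 joinx0.
have [w Iw] := I_surj (I phi `|` I (Neg phi)).
apply/eqP; rewrite -le1x -Iw -seq_true0.
by apply: (exclude [::] phi); rewrite seq_true1 Iw ?leUl ?leUr.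
Qed.

End Soundness.

Theorem proposition3p4 (disp : Order.disp_t) (L : tbLatticeType disp)
    (neg : L -> L) (I : formula -> L) :
  orthomodular neg ->
  (forall q : L, exists phi : formula, I phi = q) ->
  nom_sound neg I ->
  forall phi psi : formula,
    [/\ I (And phi psi) = I phi `&` I psi,
        I (Imp phi psi) = simp neg (I phi) (I psi) &
        I (Neg phi) = neg (I phi)].
Proof.
move=> OM I_surj sound phi psi.
split; first exact: (sound_And I_surj sound).
  exact: (sound_Imp I_surj sound OM).
exact: (sound_Neg I_surj sound OM).
Qed.
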